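(* Let $X,Y$ be continuous processes. Then 1. $L(X,Y)_t=\int_0^tX\,d^\circ Y-\int_0^tY\,d^\circ X$; 2. $L(X,Y)_t=\int_0^tX\,d^-Y-\int_0^tY\,d^-X$; where each identity is understood in the sense that if two of its three terms exist, then the third also exists and the identity holds.
   Context: $T>0$; continuous functions are extended by $f(t)=f(0)$ for $t\le0$, $f(t)=f(T)$ for $t>T$. Limits are ucp: uniform in $t\in[0,T]$, in probability, as $\varepsilon\to0^+$. $\int_0^tX\,d^-Y$ is the ucp limit of $\int_0^tX(s)\frac{Y(s+\varepsilon)-Y(s)}{\varepsilon}ds$, $\int_0^tX\,d^\circ Y$ the ucp limit of $\int_0^tX(s)\frac{Y(s+\varepsilon)-Y(s-\varepsilon)}{2\varepsilon}ds$, and the Lévy area $L(X,Y)_t$ the ucp limit of $\int_0^t\frac{X_sY_{s+\varepsilon}-X_{s+\varepsilon}Y_s}{\varepsilon}ds$. *)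

From HB Require Import structures.
From mathcomp Require Import all_boot all_order all_algebra.
From mathcomp Require Import all_classical all_reals all_analysis.
Set Implicit Arguments. Unset Strict Implicit. Unset Printing Implicit Defensive.
Import Order.TTheory GRing.Theory Num.Theory.
Import numFieldNormedType.Exports.
Local Open Scope classical_set_scope.
Local Open Scope ring_scope.

Section Defs.
Context {R : realType} {d : measure_display} {Omega : measurableType d}.

Definition ext (T : R) (f : R -> R) (s : R) : R :=
  if s <= 0 then f 0 else if T < s then f T else f s.

Definition cont_process (P : probability Omega R) (T : R) (X : Omega -> R -> R) :=
  (forall t, 0 <= t <= T -> measurable_fun setT (fun w => X w t)) /\
  (forall w, {within `[0, T], continuous (X w)}).

(* ucp convergence as eps -> 0+ of Z eps to Z0, uniform on [0,T]; the
   probability of the (possibly non-measurable) event is taken as outer probability *)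
Definition ucp (P : probability Omega R) (T : R)
  (Z : R -> Omega -> R -> R) (Z0 : Omega -> R -> R) :=
  forall delta eta : R, 0 < delta -> 0 < eta ->
  exists eps0 : R, 0 < eps0 /\
  forall eps, 0 < eps < eps0 ->
  exists A : set Omega, measurable A /\
    [set w | exists t, 0 <= t <= T /\ delta < `|Z eps w t - Z0 w t| ] `<=` A /\
    (P A <= eta%:E)%E.

Definition fwd_approx (T : R) (X Y : Omega -> R -> R) (eps : R) (w : Omega) (t : R) : R :=
  Rintegral (@lebesgue_measure R) `[0, t]
    (fun s => ext T (X w) s * ((ext T (Y w) (s + eps) - ext T (Y w) s) / eps)).

Definition sym_approx (T : R) (X Y : Omega -> R -> R) (eps : R) (w : Omega) (t : R) : R :=
  Rintegral (@lebesgue_measure R) `[0, t]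
    (fun s => ext T (X w) s * ((ext T (Y w) (s + eps) - ext T (Y w) (s - eps)) / (2 * eps))).

Definition levy_approx (T : R) (X Y : Omega -> R -> R) (eps : R) (w : Omega) (t : R) : R :=
  Rintegral (@lebesgue_measure R) `[0, t]
    (fun s => (ext T (X w) s * ext T (Y w) (s + eps) - ext T (X w) (s + eps) * ext T (Y w) s) / eps).

End Defs.

From HB Require Import structures.
From mathcomp Require Import all_boot all_order all_algebra.
From mathcomp Require Import all_classical all_reals all_analysis.
From mathcomp Require Import lra ring measurable_realfun.
Set Implicit Arguments. Unset Strict Implicit. Unset Printing Implicit Defensive.
Import Order.TTheory GRing.Theory Num.Theory.
Import numFieldNormedType.Exports.
Local Open Scope classical_set_scope.
Local Open Scope ring_scope.

(* For every eps the Levy approximation is exactly the difference of the two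
   forward approximations.  In the symmetric case the Levy approximation minus
   the two symmetric ones equals int_0^t h - int_0^t h(. - eps), where
   h s = (X_s Y_(s+eps) - X_(s+eps) Y_s) / (2 eps); the two integrals differ
   by two windows of length eps, so by the mean value theorem the residual is
   half a difference of two values of K(s,u) = X_s Y_u - X_u Y_s at points with
   |s - u| <= eps.  As K is uniformly continuous on [0,T]^2 and vanishes on the
   diagonal, the residual tends to 0 uniformly in t on every path; sampling K
   on a countable grid makes the exceptional events measurable, and continuity
   of P from above turns this into ucp convergence.  Once the residual tends to
   0 in ucp, any two of the three ucp limits determine the third. *)

Section clamp.
Context {R : realType}.

Definition clamp (T s : R) : R := if s <= 0 then 0 else if T < s then T else s.

Lemma ext_clamp T (f : R -> R) s : ext T f s = f (clamp T s).
Proof. by rewrite /ext /clamp; case: ifP => //; case: ifP. Qed.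

Lemma clamp_itv T s : 0 <= T -> 0 <= clamp T s <= T.
Proof. by move=> T0; rewrite /clamp; do 2?case: ifPn; rewrite -?ltNge -?leNgt; lra. Qed.

Lemma dist_clamp_le T s u : 0 <= T -> `|clamp T s - clamp T u| <= `|s - u|.
Proof.
move=> T0; rewrite ler_norml /clamp.
have := ler_norm (s - u); have := ler_norm (u - s); rewrite distrC.
by do 4?case: ifPn; rewrite -?ltNge -?leNgt; lra.
Qed.

End clamp.

Section continuity.
Context {R : realType}.
Implicit Types (A : set R) (f : R -> R).

Definition uniformly_continuous_on A f := forall e : R, 0 < e ->
  exists2 r : R, 0 < r & forall s u, A s -> A u -> `|s - u| < r -> `|f s - f u| < e.

Lemma continuous_within_dist_lt A f c : {within A, continuous f} -> A c ->
  forall e : R, 0 < e -> exists2 r : R, 0 < r &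
    forall y, A y -> `|c - y| < r -> `|f c - f y| < e.
Proof.
move=> /subspace_continuousP /[apply] /cvgrPdist_lt fc e e0.
by have /nbhs_ballP[r r0 cr] := fc e e0; exists r => // y Ay cy; exact: cr.
Qed.

Lemma compact_uniformly_continuous A f : compact A -> {within A, continuous f} ->
  uniformly_continuous_on A f.
Proof.
move=> cA cf e e0; apply: contrapT => nunif.
have bad n : exists su : R * R, [/\ A su.1, A su.2,
    `|su.1 - su.2| < n.+1%:R^-1 & e <= `|f su.1 - f su.2|].
  apply: contrapT => nbad; apply: nunif; exists n.+1%:R^-1; first by rewrite invr_gt0.
  move=> s u As Au su; rewrite ltNge; apply/negP => fsu; apply: nbad.
  by exists (s, u).
have [su hsu] := choice bad.
have [c [Ac cl]] : A `&` cluster ((fst \o su) @ \oo) !=set0.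
  by apply: cA; exists 0%N => // n _; have [] := hsu n.
have e20 : 0 < e / 2 by rewrite divr_gt0.
have [r r0 fc] := continuous_within_dist_lt cf Ac e20.
have r20 : 0 < r / 2 by rewrite divr_gt0.
have [N _ /(_ N (leqnn _)) Nr] := near_infty_natSinv_lt (PosNum r20).
have [_ [[n Nn <-] cs]] : [set (su n).1 | n in [set n | N <= n]%N] `&` ball c (r / 2) !=set0.
  by apply: cl (nbhsx_ballx c _ r20); exists N => // n /= Nn; exists n.
have [As Au su_lt fsu] := hsu n.
have nN : n.+1%:R^-1 <= N.+1%:R^-1 :> R by rewrite lef_pV2 ?posrE// ler_nat.
move: cs Nr; rewrite /ball /= => cs Nr.
have cu : `|c - (su n).2| < r.
  have := ler_normD (c - (su n).1) ((su n).1 - (su n).2).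
  have : `|(su n).1 - (su n).2| < r / 2.
    by apply: (lt_le_trans su_lt); apply: (le_trans nN); apply: ltW.
  by rewrite addrA subrK; lra.
have := fc _ As ltac:(lra); have := fc _ Au cu.
have := ler_normD (f (su n).1 - f c) (f c - f (su n).2).
by rewrite addrA subrK [`|f (su n).1 - f c|]distrC; lra.
Qed.

Lemma continuous_ext T f : 0 <= T -> {within `[0, T], continuous f} ->
  continuous (ext T f).
Proof.
move=> T0 cf c; apply/cvgrPdist_lt => e e0.
have clampT s : `[0, T]%classic (clamp T s) by rewrite /= in_itv /= clamp_itv.
have [r r0 fr] := continuous_within_dist_lt cf (clampT c) e0.
apply/nbhs_ballP; exists r => // y cy; rewrite !ext_clamp; apply: fr => //.
exact: le_lt_trans (dist_clamp_le _ _ T0) cy.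
Qed.

Lemma compact_continuous_bounded A f : compact A -> {within A, continuous f} ->
  exists M : R, forall s, A s -> `|f s| <= M.
Proof.
move=> cA cf; have [M [_ hM]] := compact_bounded (continuous_compact cf cA).
by exists (M + 1) => s As; apply: (hM (M + 1)); [rewrite ltrDl | exists s].
Qed.

Definition uniformly_continuous_on2 A (k : R -> R -> R) := forall e : R, 0 < e ->
  exists2 r : R, 0 < r & forall s u p q, A s -> A u -> A p -> A q ->
    `|s - p| < r -> `|u - q| < r -> `|k s u - k p q| < e.

Lemma continuous_mul_fun f g : continuous f -> continuous g ->
  continuous (fun s => f s * g s).
Proof. by move=> cf cg z; apply: cvgM; [exact: cf | exact: cg]. Qed.

Lemma continuous_sub_fun f g : continuous f -> continuous g ->
  continuous (fun s => f s - g s).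
Proof. by move=> cf cg z; apply: cvgB; [exact: cf | exact: cg]. Qed.

Lemma continuous_comp_shift f k : continuous f -> continuous (fun s => f (s + k)).
Proof. by move=> cf z; apply: continuous_comp; [exact: cvgD cvg_id (cvg_cst k) | exact: cf]. Qed.

End continuity.

Ltac continuity :=
  repeat lazymatch goal with
  | |- continuous (fun _ => ?c) => exact: cst_continuous
  | |- continuous (fun s => @?a s * @?b s) => apply: continuous_mul_fun
  | |- continuous (fun s => @?a s - @?b s) => apply: continuous_sub_fun
  | |- continuous (fun s => ?f (s + ?k)) => apply: continuous_comp_shift
  | H : continuous ?f |- continuous ?f => exact: H
  end.

Section integral_calculus.
Context {R : realType}.
Notation mu := (@lebesgue_measure R).
Implicit Types (g : R -> R) (a u v k e : R).

Lemma continuous_integrable_itv g u v : continuous g ->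
  mu.-integrable `[u, v] (EFin \o g).
Proof.
move=> cg; apply: continuous_compact_integrable; first exact: segment_compact.
exact: continuous_subspaceT.
Qed.

Lemma Rintegral_itv_sub g a u v : continuous g -> a <= u -> u <= v ->
  \int[mu]_(s in `[u, v]) g s =
  \int[mu]_(s in `[a, v]) g s - \int[mu]_(s in `[a, u]) g s.
Proof.
move=> cg au uv; rewrite (@Rintegral_itvB _ g (BLeft a) (BRight v) u) //; last first.
  exact: continuous_integrable_itv.
rewrite Rintegral_itv_obnd_cbnd //.
apply: integrableS (continuous_integrable_itv u v cg) => //.
exact: subset_itv_oc_cc.
Qed.

Lemma Rintegral_is_derive g a x : continuous g -> a < x ->
  is_derive x 1 (fun z => \int[mu]_(s in `[a, z]) g s) (g x).
Proof.
move=> cg ax; have x1 : x < x + 1 by rewrite ltrDl.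
have [dF F'x] := continuous_FTC1_closed x1 (continuous_integrable_itv a _ cg) ax (cg x).
by rewrite -F'x derive1E; exact: derivableP.
Qed.

Lemma Rintegral_mean_value g u v : continuous g -> u < v ->
  exists c, \int[mu]_(s in `[u, v]) g s = g c * (v - u).
Proof.
move=> cg uv; have au : u - 1 < u by rewrite ltrBlDr ltrDl.
have dF x : u <= x -> is_derive x 1 (fun z => \int[mu]_(s in `[u - 1, z]) g s) (g x).
  by move=> ux; apply: Rintegral_is_derive => //; exact: lt_le_trans ux.
have [||c _ Fc] := MVT uv (f := fun z => \int[mu]_(s in `[u - 1, z]) g s) (df := g).
- by move=> x /[!in_itv] /andP[ux _]; exact/dF/ltW.
- apply: derivable_within_continuous => x /[!in_itv] /andP[ux _].
  by have [] := dF x ux.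
- by exists c; rewrite (Rintegral_itv_sub cg (ltW au) (ltW uv)) Fc.
Qed.

Lemma Rintegral_shift g u v k : continuous g -> u <= v ->
  \int[mu]_(s in `[u, v]) g (s + k) = \int[mu]_(s in `[u + k, v + k]) g s.
Proof.
move=> cg; rewrite le_eqVlt => /predU1P[<-|uv].
  by rewrite !set_itv1 !Rintegral_set1.
pose a := u + k - 1; pose F := (fun z => \int[mu]_(s in `[a, z]) g s) \o shift k.
have dF x : u <= x -> derivable F x 1 /\ derive1 F x = g (x + k).
  move=> ux; have ax : a < x + k by rewrite /a; lra.
  have [dG G'] := Rintegral_is_derive cg ax.
  have [ds ds'] := is_derive_shift x 1 k.
  split; first by apply/derivable1_diffP/differentiable_comp; apply/derivable1_diffP.
  by rewrite derive1_comp // !derive1E G' ds' mulr1.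
have cF x : u <= x -> {for x, continuous F}.
  by move=> /dF[/derivable1_diffP/differentiable_continuous].
rewrite /Rintegral (@continuous_FTC2 _ _ F u v uv).
- by rewrite /= /F /= -(Rintegral_itv_sub cg) /a //; lra.
- exact/continuous_subspaceT/continuous_comp_shift.
- split; first by move=> x /[!in_itv] /andP[ux _]; have [] := dF x (ltW ux).
  + exact/cvg_at_right_filter/cF.
  + exact/cvg_at_left_filter/cF/ltW.
- by move=> x /[!in_itv] /andP[ux _]; have [] := dF x (ltW ux).
Qed.

Lemma Rintegral_sub_shift g u v e : continuous g -> 0 < e -> u <= v ->
  exists c1 c2, \int[mu]_(s in `[u, v]) g s - \int[mu]_(s in `[u, v]) g (s - e) =
    (g c1 - g c2) * e.
Proof.
move=> cg e0 uv.
have [c1 I1] : exists c, \int[mu]_(s in `[v - e, v]) g s = g c * e.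
  have [c ->] := @Rintegral_mean_value g (v - e) v cg ltac:(lra).
  by exists c; rewrite opprB addrC subrK.
have [c2 I2] : exists c, \int[mu]_(s in `[u - e, u]) g s = g c * e.
  have [c ->] := @Rintegral_mean_value g (u - e) u cg ltac:(lra).
  by exists c; rewrite opprB addrC subrK.
exists c1, c2; rewrite mulrBl -I1 -I2 Rintegral_shift //.
rewrite (Rintegral_itv_sub cg (_ : u - e <= u) uv); last lra.
rewrite (Rintegral_itv_sub cg (_ : u - e <= v - e) (_ : v - e <= v)); lra.
Qed.

End integral_calculus.

Section wedge.
Context {R : realType}.
Notation mu := (@lebesgue_measure R).
Implicit Types (A : set R) (x y : R -> R).

Definition wedge x y (s u : R) : R := x s * y u - x u * y s.

Lemma wedge_ext T x y s u :
  wedge (ext T x) (ext T y) s u = wedge x y (clamp T s) (clamp T u).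
Proof. by rewrite /wedge !ext_clamp. Qed.

Lemma normr_mulB_le (a b a' b' M : R) : `|a| <= M -> `|b'| <= M ->
  `|a * b - a' * b'| <= M * (`|b - b'| + `|a - a'|).
Proof.
move=> aM bM; have -> : a * b - a' * b' = a * (b - b') + (a - a') * b' by ring.
apply: (le_trans (ler_normD _ _)); rewrite !normrM mulrDr.
by apply: lerD; rewrite 1?[_ * `|b'|]mulrC; apply: ler_wpM2r.
Qed.

Lemma wedge_uniformly_continuous A x y : compact A ->
  {within A, continuous x} -> {within A, continuous y} ->
  uniformly_continuous_on2 A (wedge x y).
Proof.
move=> cA cx cy e e0.
have [Mx xMx] := compact_continuous_bounded cA cx.
have [My yMy] := compact_continuous_bounded cA cy.
pose M := `|Mx| + `|My| + 1.
have M0 : 0 < M by rewrite /M; have := normr_ge0 Mx; have := normr_ge0 My; lra.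
have xM s : A s -> `|x s| <= M.
  by move=> /xMx; have := ler_norm Mx; have := normr_ge0 My; rewrite /M; lra.
have yM s : A s -> `|y s| <= M.
  by move=> /yMy; have := ler_norm My; have := normr_ge0 Mx; rewrite /M; lra.
pose eta := e / (4 * M).
have eta0 : 0 < eta by rewrite divr_gt0 ?mulr_gt0.
have eE : e = M * (4 * eta) by rewrite /eta; field; rewrite gt_eqF.
have [rx rx0 xr] := compact_uniformly_continuous cA cx eta0.
have [ry ry0 yr] := compact_uniformly_continuous cA cy eta0.
exists (Num.min rx ry); first by rewrite lt_min rx0.
move=> s u p q As Au Ap Aq; rewrite !lt_min => /andP[sx sy] /andP[ux uy].
have -> : wedge x y s u - wedge x y p q =
    (x s * y u - x p * y q) - (x u * y s - x q * y p) by rewrite /wedge; ring.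
apply: (le_lt_trans (ler_normB _ _)).
apply: (le_lt_trans (lerD (normr_mulB_le (y u) (x p) (xM s As) (yM q Aq))
                          (normr_mulB_le (y s) (x q) (xM u Au) (yM p Ap)))).
rewrite -mulrDr eE ltr_pM2l //.
have := xr _ _ As Ap sx; have := xr _ _ Au Aq ux.
have := yr _ _ As Ap sy; have := yr _ _ Au Aq uy; lra.
Qed.

Lemma levy_integral_fwd x y e t : continuous x -> continuous y -> e != 0 ->
  \int[mu]_(s in `[0, t]) ((x s * y (s + e) - x (s + e) * y s) / e) =
  \int[mu]_(s in `[0, t]) (x s * ((y (s + e) - y s) / e)) -
  \int[mu]_(s in `[0, t]) (y s * ((x (s + e) - x s) / e)).
Proof.
move=> cx cy e0; rewrite -RintegralB //; last 2 first.
- by apply: continuous_integrable_itv; continuity.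
- by apply: continuous_integrable_itv; continuity.
by apply: eq_Rintegral => s _; field.
Qed.

Lemma levy_integral_sym x y e t : continuous x -> continuous y -> 0 < e -> 0 <= t ->
  exists c1 c2,
  \int[mu]_(s in `[0, t]) ((x s * y (s + e) - x (s + e) * y s) / e) -
  (\int[mu]_(s in `[0, t]) (x s * ((y (s + e) - y (s - e)) / (2 * e))) -
   \int[mu]_(s in `[0, t]) (y s * ((x (s + e) - x (s - e)) / (2 * e)))) =
  (wedge x y c1 (c1 + e) - wedge x y c2 (c2 + e)) / 2.
Proof.
move=> cx cy e0 t0; pose h s := wedge x y s (s + e) / (2 * e).
have ch : continuous h by rewrite /h /wedge; continuity.
have [c1 [c2 hc]] := Rintegral_sub_shift ch e0 t0.
exists c1, c2.
have -> : (wedge x y c1 (c1 + e) - wedge x y c2 (c2 + e)) / 2 = (h c1 - h c2) * e.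
  by rewrite /h; field; rewrite gt_eqF.
rewrite -hc -!RintegralB //.
- by apply: eq_Rintegral => s _; rewrite /h /wedge subrK; field; rewrite gt_eqF.
all: by apply: continuous_integrable_itv; continuity.
Qed.

End wedge.

Section ucp_calculus.
Context {R : realType} {d : measure_display} {Omega : measurableType d}.
Variables (P : probability Omega R) (T : R).
Implicit Types (Z : R -> Omega -> R -> R) (z : Omega -> R -> R).

Lemma ucp_eq Z Z' z z' : ucp P T Z z ->
  (forall e w t, 0 < e -> 0 <= t <= T -> Z e w t = Z' e w t) ->
  (forall w t, 0 <= t <= T -> z w t = z' w t) -> ucp P T Z' z'.
Proof.
move=> Zz eZ ez delta eta d0 eta0; have [e0 [e00 Ze]] := Zz _ _ d0 eta0.
exists e0; split => // e /[dup] /andP[e_gt0 _] /Ze[A [mA [ZA PA]]].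
exists A; split => //; split => // w [t [tT lt]]; apply: ZA.
by exists t; rewrite eZ ?ez.
Qed.

Lemma ucp_cst z : ucp P T (fun _ => z) z.
Proof.
move=> delta eta d0 eta0; exists 1; split => // e _; exists set0.
split => //; split; last by rewrite measure0 lee_fin ltW.
by move=> w [t [_]]; rewrite subrr normr0 ltNge ltW.
Qed.

Lemma ucpN Z z : ucp P T Z z ->
  ucp P T (fun e w t => - Z e w t) (fun w t => - z w t).
Proof.
move=> Zz delta eta d0 eta0; have [e0 [e00 Ze]] := Zz _ _ d0 eta0.
exists e0; split => // e /Ze[A [mA [ZA PA]]]; exists A; split => //; split => //.
by move=> w [t [tT]]; rewrite -opprD normrN => lt; apply: ZA; exists t.
Qed.

Lemma ucpD Z1 Z2 z1 z2 : ucp P T Z1 z1 -> ucp P T Z2 z2 ->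
  ucp P T (fun e w t => Z1 e w t + Z2 e w t) (fun w t => z1 w t + z2 w t).
Proof.
move=> Zz1 Zz2 delta eta d0 eta0.
have d20 : 0 < delta / 2 by rewrite divr_gt0.
have eta20 : 0 < eta / 2 by rewrite divr_gt0.
have [e1 [e10 Ze1]] := Zz1 _ _ d20 eta20.
have [e2 [e20 Ze2]] := Zz2 _ _ d20 eta20.
exists (Num.min e1 e2); split; first by rewrite lt_min e10.
move=> e /andP[e0]; rewrite lt_min => /andP[ee1 ee2].
have [A1 [mA1 [ZA1 PA1]]] := Ze1 e ltac:(by rewrite e0).
have [A2 [mA2 [ZA2 PA2]]] := Ze2 e ltac:(by rewrite e0).
exists (A1 `|` A2); split; first exact: measurableU.
split.
  move=> w [t [tT lt]].
  have := ler_normD (Z1 e w t - z1 w t) (Z2 e w t - z2 w t).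
  have -> : Z1 e w t - z1 w t + (Z2 e w t - z2 w t) =
    Z1 e w t + Z2 e w t - (z1 w t + z2 w t) by ring.
  have [lt1|] := ltP (delta / 2) `|Z1 e w t - z1 w t|; first by left; apply: ZA1; exists t.
  have [lt2|] := ltP (delta / 2) `|Z2 e w t - z2 w t|; first by right; apply: ZA2; exists t.
  lra.
apply: le_trans (measureU2 _ _ _) _ => //.
by rewrite [eta](splitr eta) EFinD leeD.
Qed.

Lemma ucp_sub_two_of_three (L A B : R -> Omega -> R -> R) :
  ucp P T (fun e w t => L e w t - (A e w t - B e w t)) (fun _ _ => 0) ->
  [/\ forall a b, ucp P T A a -> ucp P T B b -> ucp P T L (fun w t => a w t - b w t),
      forall l a, ucp P T L l -> ucp P T A a -> ucp P T B (fun w t => a w t - l w t) &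
      forall l b, ucp P T L l -> ucp P T B b -> ucp P T A (fun w t => l w t + b w t)].
Proof.
move=> LAB; split => [a b Aa Bb | l a Ll Aa | l b Ll Bb].
- by apply: ucp_eq (ucpD (ucpD Aa (ucpN Bb)) LAB) _ _ => *; ring.
- by apply: ucp_eq (ucpD Aa (ucpN (ucpD Ll (ucpN LAB)))) _ _ => *; ring.
- by apply: ucp_eq (ucpD (ucpD Ll (ucpN LAB)) Bb) _ _ => *; ring.
Qed.

End ucp_calculus.

Section grid.
Context {R : realType}.

Definition grid (N i : nat) : R := i%:R / N.+1%:R.

Lemma grid_ge0 N i : 0 <= grid N i.
Proof. by rewrite divr_ge0. Qed.

Lemma grid_approx N (s : R) : 0 <= s ->
  exists i, grid N i <= s < grid N i + N.+1%:R^-1.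
Proof.
move=> s0; have N0 : 0 < N.+1%:R :> R by [].
have /andP[lo hi] := truncn_itv (mulr_ge0 s0 (ltW N0)).
exists (Num.truncn (s * N.+1%:R)).
rewrite /grid ler_pdivrMr // lo /= -[X in _ + X]mul1r -mulrDl natr1.
by rewrite ltr_pdivlMr.
Qed.

End grid.

Section ucp_near_diagonal.
Context {R : realType} {d : measure_display} {Omega : measurableType d}.
Variables (P : probability Omega R) (T : R) (K : Omega -> R -> R -> R).
Hypothesis K_meas : forall s u, s \in `[0, T] -> u \in `[0, T] ->
  measurable_fun setT (fun w => K w s u).
Hypothesis K_unif : forall w, uniformly_continuous_on2 `[0, T] (K w).
Hypothesis K_diag : forall w s, K w s s = 0.

Local Notation grid := (@grid R).

Lemma probability_bigcap0_small (F : (set Omega)^nat) :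
  (forall n, measurable (F n)) -> nonincreasing_seq F -> \bigcap_n F n = set0 ->
  forall eta : R, 0 < eta -> exists n, (P (F n) <= eta%:E)%E.
Proof.
move=> mF decF capF eta eta0.
have := nonincreasing_cvg_mu (le_lt_trans (probability_le1 P (mF 0%N)) (ltry _)) mF
  ltac:(rewrite capF; exact: measurable0) decF.
rewrite capF measure0 => /fine_cvgP[_ /cvgrPdist_lt /(_ eta eta0) [n _ Fn]].
exists n; have := Fn n (leqnn n); rewrite /= sub0r normrN => PFn.
rewrite -(fineK (fin_num_measure P _ (mF n))) lee_fin.
exact: le_trans (ler_norm _) (ltW PFn).
Qed.

Let grid_itv N i : grid N i <= T -> grid N i \in `[0, T].
Proof. by rewrite in_itv /= grid_ge0. Qed.

(* Sampling [K] on the countable grid makes this event measurable. *)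
Let excess n (delta : R) : set Omega :=
  \bigcup_N \bigcup_i \bigcup_j [set w |
    [/\ grid N i <= T, grid N j <= T & `|grid N i - grid N j| < n.+1%:R^-1] /\
    delta < `|K w (grid N i) (grid N j)|].

Let measurable_excess n delta : measurable (excess n delta).
Proof.
apply: bigcupT_measurable => N; apply: bigcupT_measurable => i.
apply: bigcupT_measurable => j.
have [[iT jT ij]|nc] :=
  pselect [/\ grid N i <= T, grid N j <= T & `|grid N i - grid N j| < n.+1%:R^-1].
- have -> : [set w | [/\ grid N i <= T, grid N j <= T &
      `|grid N i - grid N j| < n.+1%:R^-1] /\ delta < `|K w (grid N i) (grid N j)|] =
      [set w | delta < `|K w (grid N i) (grid N j)|].
    by apply/seteqP; split => w /=; [case | move=> Kw; split].
  have mK : measurable_fun setT (fun w => `|K w (grid N i) (grid N j)|).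
    by apply: measurableT_comp => //; exact: K_meas (grid_itv iT) (grid_itv jT).
  rewrite -[X in measurable X]setTI -preimage_itvoy.
  by apply: mK => //; exact: measurable_itv.
- have -> : [set w | [/\ grid N i <= T, grid N j <= T &
      `|grid N i - grid N j| < n.+1%:R^-1] /\ delta < `|K w (grid N i) (grid N j)|] = set0.
    by apply/seteqP; split => w // [].
  exact: measurable0.
Qed.

Let excess_nonincreasing delta : nonincreasing_seq (excess ^~ delta).
Proof.
move=> n m nm; apply/subsetPset => w [N _ [i _ [j _ [[iT jT ij] Kij]]]].
exists N => //; exists i => //; exists j => //; split => //; split => //.
by apply: (lt_le_trans ij); rewrite lef_pV2 ?posrE // ler_nat ltnS.
Qed.

Let excess_bigcap0 delta : 0 < delta -> \bigcap_n excess n delta = set0.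
Proof.
move=> d0; apply/seteqP; split => w // Ew.
have [r r0 Kr] := K_unif w d0.
have [n _ /(_ n (leqnn _)) nr] := near_infty_natSinv_lt (PosNum r0).
have [N _ [i _ [j _ [[iT jT ij] Kij]]]] := Ew n I.
have := Kr _ _ _ _ (grid_itv iT) (grid_itv jT) (grid_itv iT) (grid_itv iT).
rewrite K_diag subr0 subrr normr0 distrC => /(_ r0 (lt_trans ij nr)).
by rewrite ltNge (ltW Kij).
Qed.

Let excess_cover n delta e w s u : 0 < delta -> e < n.+1%:R^-1 ->
  s \in `[0, T] -> u \in `[0, T] -> `|s - u| <= e ->
  delta < `|K w s u| -> excess n (delta / 2) w.
Proof.
move=> d0 en sT uT su Ksu.
move: (sT) (uT); rewrite !in_itv /= => /andP[s0 s1] /andP[u0 u1].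
have d20 : 0 < delta / 2 by rewrite divr_gt0.
have [r r0 Kr] := K_unif w d20.
have rho0 : 0 < Num.min r (n.+1%:R^-1 - e) by rewrite lt_min r0 subr_gt0.
have [N _ /(_ N (leqnn _)) Nrho] := near_infty_natSinv_lt (PosNum rho0).
have [i /andP[is' si]] := grid_approx N s0.
have [j /andP[ju uj]] := grid_approx N u0.
move: Nrho; rewrite /= lt_min => /andP[Nr Nn].
(* [lra] does not accept [_%:R^-1] as an atom, hence the generalizations. *)
move: (N.+1%:R^-1) si uj Nr Nn => h si uj Nr Nn.
exists N => //; exists i => //; exists j => //; split.
  split; [exact: le_trans is' s1 | exact: le_trans ju u1 |].
  move: (n.+1%:R^-1) Nn => a Nn; move: su; rewrite !ler_norml !ltr_norml.
  by move=> /andP[? ?]; apply/andP; split; lra.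
have iT : grid N i \in `[0, T] by apply: grid_itv; exact: le_trans is' s1.
have jT : grid N j \in `[0, T] by apply: grid_itv; exact: le_trans ju u1.
have sir : `|s - grid N i| < r by rewrite ger0_norm ?subr_ge0 //; lra.
have ujr : `|u - grid N j| < r by rewrite ger0_norm ?subr_ge0 //; lra.
have := Kr _ _ _ _ sT uT iT jT sir ujr.
have := ler_normD (K w s u - K w (grid N i) (grid N j)) (K w (grid N i) (grid N j)).
by rewrite subrK; lra.
Qed.

Lemma ucp_dominated_near_diagonal (Z : R -> Omega -> R -> R) :
  (forall e w t, 0 < e -> 0 <= t <= T -> exists s u,
     [/\ s \in `[0, T], u \in `[0, T], `|s - u| <= e & `|Z e w t| <= `|K w s u|]) ->
  ucp P T Z (fun _ _ => 0).
Proof.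
move=> Zdom delta eta d0 eta0.
have d20 : 0 < delta / 2 by rewrite divr_gt0.
have [n Pn] := probability_bigcap0_small (measurable_excess ^~ (delta / 2))
  (excess_nonincreasing _) (excess_bigcap0 d20) eta0.
exists n.+1%:R^-1; split; first by rewrite invr_gt0.
move=> e /andP[e0 en]; exists (excess n (delta / 2)); split => //.
split => // w [t [tT]]; rewrite subr0 => Zlt.
have [s [u [sT uT su Zsu]]] := Zdom e w t e0 tT.
exact: excess_cover d0 en sT uT su (lt_le_trans Zlt Zsu).
Qed.

End ucp_near_diagonal.

Section levy_area.
Context {R : realType} {d : measure_display} {Omega : measurableType d}.
Variables (P : probability Omega R) (T : R) (X Y : Omega -> R -> R).
Hypotheses (T0 : 0 < T) (hX : cont_process P T X) (hY : cont_process P T Y).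

Lemma ucp_levy_sub_fwd : ucp P T (fun e w t =>
  levy_approx T X Y e w t - (fwd_approx T X Y e w t - fwd_approx T Y X e w t))
  (fun _ _ => 0).
Proof.
apply: ucp_eq (ucp_cst P T (fun _ _ => 0)) _ _ => // e w t e0 _.
rewrite /levy_approx /fwd_approx levy_integral_fwd ?subrr ?gt_eqF //.
- exact: continuous_ext (ltW T0) (hX.2 w).
- exact: continuous_ext (ltW T0) (hY.2 w).
Qed.

Lemma ucp_levy_sub_sym : ucp P T (fun e w t =>
  levy_approx T X Y e w t - (sym_approx T X Y e w t - sym_approx T Y X e w t))
  (fun _ _ => 0).
Proof.
apply: (@ucp_dominated_near_diagonal R d Omega P T (fun w => wedge (X w) (Y w))).
- move=> s u; rewrite !in_itv /= => sT uT.
  by apply: measurable_funB; apply: measurable_funM;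
    [exact: hX.1 | exact: hY.1 | exact: hX.1 | exact: hY.1].
- by move=> w; apply: wedge_uniformly_continuous (hX.2 w) (hY.2 w); exact: segment_compact.
- by move=> w s; rewrite /wedge subrr.
move=> e w t e0 /andP[t0 _].
have [c1 [c2 ->]] := levy_integral_sym (continuous_ext (ltW T0) (hX.2 w))
  (continuous_ext (ltW T0) (hY.2 w)) e0 t0.
have clamp_pair c : [/\ clamp T c \in `[0, T], clamp T (c + e) \in `[0, T] &
    `|clamp T c - clamp T (c + e)| <= e].
  rewrite !in_itv /= !clamp_itv ?(ltW T0) //; split => //.
  apply: le_trans (dist_clamp_le _ _ (ltW T0)) _.
  by rewrite opprD addrA subrr sub0r normrN gtr0_norm.
rewrite !wedge_ext.
set a := wedge (X w) (Y w) _ _; set b := wedge (X w) (Y w) _ _.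
have ab : `|(a - b) / 2| <= Num.max `|a| `|b|.
  rewrite normrM normfV normr_nat le_max; have := ler_normB a b.
  by case: (leP `|a| `|b|) => ? ?; apply/orP; [right | left]; lra.
move: ab; rewrite le_max => /orP[ab | ab].
- by have [? ? ?] := clamp_pair c1; exists (clamp T c1), (clamp T (c1 + e)).
- by have [? ? ?] := clamp_pair c2; exists (clamp T c2), (clamp T (c2 + e)).
Qed.

End levy_area.

Theorem proposition4p9 (R : realType) (d : measure_display) (Omega : measurableType d)
  (P : probability Omega R) (T : R) (hT : 0 < T) (X Y : Omega -> R -> R)
  (hX : cont_process P T X) (hY : cont_process P T Y) :
  (* 1. symmetric integrals *)
  (forall IXY IYX : Omega -> R -> R,
     ucp P T (sym_approx T X Y) IXY -> ucp P T (sym_approx T Y X) IYX ->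
     ucp P T (levy_approx T X Y) (fun w t => IXY w t - IYX w t)) /\
  (forall L IXY : Omega -> R -> R,
     ucp P T (levy_approx T X Y) L -> ucp P T (sym_approx T X Y) IXY ->
     ucp P T (sym_approx T Y X) (fun w t => IXY w t - L w t)) /\
  (forall L IYX : Omega -> R -> R,
     ucp P T (levy_approx T X Y) L -> ucp P T (sym_approx T Y X) IYX ->
     ucp P T (sym_approx T X Y) (fun w t => L w t + IYX w t)) /\
  (* 2. forward integrals *)
  (forall IXY IYX : Omega -> R -> R,
     ucp P T (fwd_approx T X Y) IXY -> ucp P T (fwd_approx T Y X) IYX ->
     ucp P T (levy_approx T X Y) (fun w t => IXY w t - IYX w t)) /\
  (forall L IXY : Omega -> R -> R,
     ucp P T (levy_approx T X Y) L -> ucp P T (fwd_approx T X Y) IXY ->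
     ucp P T (fwd_approx T Y X) (fun w t => IXY w t - L w t)) /\
  (forall L IYX : Omega -> R -> R,
     ucp P T (levy_approx T X Y) L -> ucp P T (fwd_approx T Y X) IYX ->
     ucp P T (fwd_approx T X Y) (fun w t => L w t + IYX w t)).
Proof.
have [sym1 sym2 sym3] := ucp_sub_two_of_three (ucp_levy_sub_sym hT hX hY).
have [fwd1 fwd2 fwd3] := ucp_sub_two_of_three (ucp_levy_sub_fwd hT hX hY).
by repeat split.
Qed.
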